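(* Let $m\ge 1$ and $A=(a_0,\ldots,a_m)$ real with $a_0,a_m\neq0$. If $w$ is a nonzero complex number with $P_A(w)=P_A(w^{-1})=0$, then $T_{n,A}\!\left(\tfrac12(w+w^{-1})\right)=0$ for all $n\ge m$.
   Context: $T_k$ denotes the Chebyshev polynomial of the first kind, $T_k(\cos\theta)=\cos k\theta$. For $A=(a_0,\ldots,a_m)$ real with $a_0,a_m\ne0$ and $n\ge m$, $T_{n,A}(x)=\sum_{i=0}^m a_iT_{n-i}(x)$ and $P_A(x)=\sum_{i=0}^m a_ix^{m-i}$. *)

From HB Require Import structures.
From mathcomp Require Import all_boot all_order all_algebra.
Set Implicit Arguments. Unset Strict Implicit. Unset Printing Implicit Defensive.
Import Order.TTheory GRing.Theory Num.Theory.
Local Open Scope ring_scope.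

Fixpoint chebT (R : nzRingType) (k : nat) : {poly R} :=
  match k with
  | 0%N => 1
  | 1%N => 'X
  | (k'.+1 as k1).+1 => ('X *+ 2) * chebT R k1 - chebT R k'
  end.

(* A = (a_0, ..., a_m) is given by a : nat -> R, using indices 0..m. *)
Definition chebTA (R : nzRingType) (n m : nat) (a : nat -> R) : {poly R} :=
  \sum_(i < m.+1) a i *: chebT R (n - i)%N.

Definition PA (R : nzRingType) (m : nat) (a : nat -> R) : {poly R} :=
  \sum_(i < m.+1) a i *: 'X^(m - i)%N.

From HB Require Import structures.
From mathcomp Require Import all_boot all_order all_algebra.
From mathcomp Require Import ring zify.
Import Order.TTheory GRing.Theory Num.Theory.
Local Open Scope ring_scope.

(* Put x = (w + u) / 2 with w * u = 1.  The power sums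
   s_k = w^k + u^k obey the Chebyshev recurrence s_{k+2} = 2x s_{k+1} - s_k,
   so T_k(x) = s_k / 2 (the algebraic form of T_k(cos t) = cos(kt)).
   Consequently, for n >= m, splitting n - i = (n - m) + (m - i) gives
     2 T_{n,A}(x) = w^(n-m) P_A(w) + u^(n-m) P_A(u),
   and taking u = w^-1 the right-hand side vanishes when w and w^-1 are
   both roots of P_A. *)

Section ChebyshevAtSymmetricPoint.

Variables (F : fieldType) (w u : F).
Hypothesis wu1 : w * u = 1.
Hypothesis two_neq0 : (2%:R : F) != 0.

Lemma power_sum_rec (k : nat) :
  w ^+ k.+2 + u ^+ k.+2 = (w + u) * (w ^+ k.+1 + u ^+ k.+1) - (w ^+ k + u ^+ k).
Proof.
have -> : w ^+ k + u ^+ k = (w * u) * (w ^+ k + u ^+ k) by rewrite wu1 mul1r.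
by rewrite !exprS; ring.
Qed.

(* T_k((w + u) / 2) = (w^k + u^k) / 2, proved for k and k+1 simultaneously
   because the recurrence defining T_k has depth two. *)
Lemma horner_chebT_sym (k : nat) :
  (chebT F k).[(w + u) / 2%:R] = (w ^+ k + u ^+ k) / 2%:R.
Proof.
suff [] : (chebT F k).[(w + u) / 2%:R] = (w ^+ k + u ^+ k) / 2%:R /\
          (chebT F k.+1).[(w + u) / 2%:R] = (w ^+ k.+1 + u ^+ k.+1) / 2%:R by [].
elim: k => [|k [IHk IHk1]].
  by rewrite /= hornerC hornerX expr0 expr1; split=> //; field.
split=> //.
rewrite [chebT F k.+2]/= hornerD hornerN hornerM hornerMn hornerX IHk IHk1.
by rewrite power_sum_rec; field.
Qed.

End ChebyshevAtSymmetricPoint.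

Lemma horner_PA (R : comNzRingType) (m : nat) (a : nat -> R) (x : R) :
  (PA m a).[x] = \sum_(i < m.+1) a i * x ^+ (m - i).
Proof. by rewrite /PA horner_sum; apply: eq_bigr => i _; rewrite hornerZ hornerXn. Qed.

Lemma horner_chebTA_sym (F : fieldType) (w u : F) (m n : nat) (a : nat -> F) :
  w * u = 1 -> (2%:R : F) != 0 -> (m <= n)%N ->
  (chebTA n m a).[(w + u) / 2%:R] =
    (w ^+ (n - m) * (PA m a).[w] + u ^+ (n - m) * (PA m a).[u]) / 2%:R.
Proof.
move=> wu1 two_neq0 mn.
rewrite /chebTA horner_sum !horner_PA !mulr_sumr -big_split mulr_suml /=.
apply: eq_bigr => i _.
have split_exp : (n - i = (n - m) + (m - i))%N by have := ltn_ord i; lia.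
by rewrite hornerZ horner_chebT_sym // split_exp !exprD; ring.
Qed.

Theorem corollary2p2 (C : numClosedFieldType) (m : nat) (a : nat -> C) :
  (1 <= m)%N ->
  (forall i, (i <= m)%N -> a i \is Num.real) ->
  a 0%N != 0 -> a m != 0 ->
  forall w : C, w != 0 ->
  (PA m a).[w] = 0 -> (PA m a).[w^-1] = 0 ->
  forall n : nat, (m <= n)%N ->
  (chebTA n m a).[(w + w^-1) / 2%:R] = 0.
Proof.
move=> _ _ _ _ w w_neq0 Pw Pwinv n mn.
have wwinv : w * w^-1 = 1 by rewrite mulfV.
have two_neq0 : (2%:R : C) != 0 by rewrite pnatr_eq0.
by rewrite horner_chebTA_sym // Pw Pwinv !mulr0 addr0 mul0r.
Qed.
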